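(* Let $\varphi=\forall x_1\exists y_1\cdots\forall x_k\exists y_k\,P$ be a positive Horn sentence over a finite relational signature $\sigma$ with $P$ a conjunction of equality-free atomic $\sigma$-formulas, and let $\alpha$ be a positive integer or $\omega$. For every finite substructure $\mathcal{A}$ of $\mathcal{T}_\varphi(C_\alpha)$ (with domain $A$) there is a constant-conservative homomorphism from $\mathcal{A}$ to $\mathcal{T}^{|A|}_\varphi(C_\alpha)$.
   Context: Let $f_1,\dots,f_k$ be new function symbols, $f_i$ of arity $i$, and $\mathrm{Sk}(\varphi)=\forall x_1\cdots\forall x_k\,P(x_1,f_1(x_1),\dots,x_k,f_k(x_1,\dots,x_k))$. $C_\alpha=\{c_1,\dots,c_\alpha\}$ (or $\{c_1,c_2,\dots\}$ if $\alpha=\omega$) are new constants, $T_\varphi(C_\alpha)$ is the set of closed terms built from $C_\alpha$ with the $f_i$, and the rank of a term is its maximal nesting depth of function symbols. $\mathcal{T}_\varphi(C_\alpha)$ is the $\sigma$-structure on $T_\varphi(C_\alpha)$ in which $R(t_1,\dots,t_p)$ holds iff it is obtained from an atom of the matrix of $\mathrm{Sk}(\varphi)$ by substituting terms of $T_\varphi(C_\alpha)$ for $x_1,\dots,x_k$. $\mathcal{T}^m_\varphi(C_\alpha)$ is the induced substructure of $\mathcal{T}_\varphi(C_\alpha)$ on terms of rank $\leq m$. A partial map $f$ on $T_\varphi(C_\alpha)$ is constant-conservative if for every $t$ in its domain, every constant occurring in $f(t)$ occurs in $t$. *)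

From mathcomp Require Import all_boot.
Set Implicit Arguments. Unset Strict Implicit. Unset Printing Implicit Defensive.

(* Closed terms over constants C_alpha and Skolem symbols f_1..f_k are encoded
   as GenTree.tree nat:
     GenTree.Leaf n        = the constant c_{n+1}
     GenTree.Node i [t_0;..;t_i] = f_{i+1}(t_0,..,t_i)   (arity i+1).
   Well-formedness (membership in T_phi(C_alpha)) is the predicate [wf]. *)
Definition term := GenTree.tree nat.

(* Variables of the matrix P: inl i = x_{i+1}, inr i = y_{i+1}. *)
Definition var (k : nat) : Type := ('I_k + 'I_k)%type.

(* alpha : None = omega, Some a = positive integer a. *)
Fixpoint wf (k : nat) (alpha : option nat) (t : term) : bool :=
  match t with
  | GenTree.Leaf n => if alpha is Some a then n < a else true
  | GenTree.Node i ts => [&& i < k, size ts == i.+1 & all (wf k alpha) ts]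
  end.

Fixpoint rank (t : term) : nat :=
  match t with
  | GenTree.Leaf _ => 0
  | GenTree.Node _ ts => (foldr maxn 0 (map rank ts)).+1
  end.

Fixpoint consts (t : term) : seq nat :=
  match t with
  | GenTree.Leaf n => [:: n]
  | GenTree.Node _ ts => flatten (map consts ts)
  end.

(* Value of a variable under the Skolemized substitution:
   x_{i+1} |-> s i,  y_{i+1} |-> f_{i+1}(s 0, ..., s i). *)
Definition skval (k : nat) (s : 'I_k -> term) (v : var k) : term :=
  match v with
  | inl i => s i
  | inr i => GenTree.Node i
      (map (fun j : 'I_i.+1 => s (widen_ord (ltn_ord i) j)) (enum 'I_i.+1))
  end.

Definition atom (Sig : finType) (ar : Sig -> nat) (k : nat) :=
  {R : Sig & (ar R).-tuple (var k)}.

Definition TRel (Sig : finType) (ar : Sig -> nat) (k : nat)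
  (P : seq (atom ar k)) (alpha : option nat) (R : Sig) (ts : seq term) : Prop :=
  exists2 a, a \in P &
    projT1 a = R /\
    exists s : 'I_k -> term,
      (forall i, wf k alpha (s i)) /\ ts = map (skval s) (projT2 a).

From mathcomp Require Import all_boot.

Set Implicit Arguments.
Unset Strict Implicit.
Unset Printing Implicit Defensive.

(* The homomorphism [prune A] rebuilds a term of [A] top-down, keeping every
   immediate subterm that again lies in [A] and collapsing every other one to a
   constant occurring in it.  If [R(ts)] holds with [ts] inside [A] through the
   substitution [s], it also holds for [map (prune A) ts] through [collapse A \o s]:
   the x-values [s i] that occur lie in [A], and pruning a Skolem term
   [f_i(s 0, ..., s i)] collapses exactly its arguments.  Along a chain of nested
   kept subterms the ranks strictly decrease, so the depth of [prune A t] is at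
   most the number of elements of [A] of rank at most [rank t]. *)

Lemma tree_ind_mem (T : eqType) (Q : GenTree.tree T -> Prop) :
  (forall x, Q (GenTree.Leaf x)) ->
  (forall n ts, (forall u, u \in ts -> Q u) -> Q (GenTree.Node n ts)) ->
  forall t, Q t.
Proof.
move=> Qleaf Qnode; fix IH 1 => -[x | n ts]; first exact: Qleaf.
apply: Qnode; elim: ts => [|u ts IHts] v.
  (* Left in context, [IH] would be used by [done] on [v], breaking the guard. *)
  by clear IH.
by rewrite inE => /predU1P [-> | /IHts].
Qed.

Lemma sub_count_lt (T : eqType) (p q : pred T) (s : seq T) (x : T) :
  subpred q p -> x \in s -> p x -> ~~ q x -> count q s < count p s.
Proof.
move=> qp; elim: s => //= y s IHs; rewrite inE => /predU1P [<- | xs] px nqx.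
  by rewrite px (negbTE nqx) add0n ltnS sub_count.
rewrite -addnS leq_add ?IHs //.
by case: (boolP (q y)) => // /qp ->.
Qed.

Lemma rank_node i ts : rank (GenTree.Node i ts) = (\max_(u <- ts) rank u).+1.
Proof. by rewrite /= foldr_map unlock. Qed.

Lemma rank_subterm_lt i ts u : u \in ts -> rank u < rank (GenTree.Node i ts).
Proof. by move=> uts; rewrite rank_node ltnS (@leq_bigmax_seq _ _ xpredT). Qed.

Lemma rank_node_leq i ts m :
  0 < m -> (forall u, u \in ts -> rank u < m) -> rank (GenTree.Node i ts) <= m.
Proof.
move=> m_gt0 ltm; rewrite rank_node -(prednK m_gt0) ltnS.
by apply/bigmax_leqP_seq => u uts _; rewrite -ltnS prednK ?ltm.
Qed.

Definition lead_const (t : term) : nat := head 0 (consts t).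

Section WellFormed.

Variables (k : nat) (alpha : option nat).

Lemma wf_consts_neq0 t : wf k alpha t -> consts t != [::].
Proof.
elim/tree_ind_mem: t => [n | i ts IH] //= /and3P [_ /eqP sz /allP wfts].
case: ts sz IH wfts => // u us _ IH wfts /=.
by case: (consts u) (IH u (mem_head _ _) (wfts u (mem_head _ _))).
Qed.

Lemma lead_const_mem t : wf k alpha t -> lead_const t \in consts t.
Proof.
by move/wf_consts_neq0; rewrite /lead_const; case: (consts t) => // c cs _; exact: mem_head.
Qed.

Lemma wf_leaf_consts t c : wf k alpha t -> c \in consts t -> wf k alpha (GenTree.Leaf c).
Proof.
elim/tree_ind_mem: t => [n | i ts IH] /=; first by move=> ? /[!inE] /eqP ->.
case/and3P=> _ _ /allP wfts /flattenP [_ /mapP [u uts ->]].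
exact: IH (wfts u uts).
Qed.

Lemma wf_lead_const t : wf k alpha t -> wf k alpha (GenTree.Leaf (lead_const t)).
Proof. by move=> wft; apply: wf_leaf_consts wft (lead_const_mem wft). Qed.

End WellFormed.

Fixpoint prune (A : seq term) (t : term) : term :=
  match t with
  | GenTree.Leaf n => GenTree.Leaf n
  | GenTree.Node i ts => GenTree.Node i
      (map (fun u => if u \in A then prune A u else GenTree.Leaf (lead_const u)) ts)
  end.

Definition collapse (A : seq term) (u : term) : term :=
  if u \in A then prune A u else GenTree.Leaf (lead_const u).

Lemma prune_node A i ts : prune A (GenTree.Node i ts) = GenTree.Node i (map (collapse A) ts).
Proof. by []. Qed.

Section Prune.

Variable A : seq term.

Lemma wf_prune k alpha t : wf k alpha t -> wf k alpha (prune A t).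
Proof.
elim/tree_ind_mem: t => [n | i ts IH] //= /and3P [-> /eqP sz /allP wfts].
rewrite size_map sz eqxx; apply/allP => _ /mapP [u uts ->].
by case: ifP => _; [apply: IH | apply: wf_lead_const]; rewrite ?wfts.
Qed.

Lemma wf_collapse k alpha u : wf k alpha u -> wf k alpha (collapse A u).
Proof. by rewrite /collapse; case: ifP => _; [apply: wf_prune | apply: wf_lead_const]. Qed.

Lemma consts_prune k alpha t : wf k alpha t -> {subset consts (prune A t) <= consts t}.
Proof.
elim/tree_ind_mem: t => [n _ c // | i ts IH] /= /and3P [_ _ /allP wfts].
move=> c /flattenP [_ /mapP [_ /mapP [u uts ->] ->] cu].
apply/flattenP; exists (consts u); first exact: map_f.
move: cu; case: ifP => _; first exact: IH (wfts u uts) c.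
by rewrite inE => /eqP ->; apply: lead_const_mem (wfts u uts).
Qed.

Lemma rank_prune t : t \in A -> rank (prune A t) <= count (fun u => rank u <= rank t) (undup A).
Proof.
elim/tree_ind_mem: t => [n | i ts IH] // tA.
have tA' : GenTree.Node i ts \in undup A by rewrite mem_undup.
have count_gt0 : 0 < count (fun u => rank u <= rank (GenTree.Node i ts)) (undup A).
  by rewrite -has_count; apply/hasP; exists (GenTree.Node i ts).
rewrite prune_node; apply: rank_node_leq => // _ /mapP [u uts ->].
rewrite /collapse; case: ifP => // uA; apply: leq_ltn_trans (IH u uts uA) _.
have ltu := rank_subterm_lt i uts.
apply: (sub_count_lt _ tA') => //.
- by move=> v /= /leq_ltn_trans /(_ ltu) /ltnW.
- by rewrite /= leqNgt ltu.
Qed.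

Lemma map_prune_skval k (s : 'I_k -> term) (vs : seq (var k)) :
  {subset map (skval s) vs <= A} ->
  map (prune A) (map (skval s) vs) = map (skval (collapse A \o s)) vs.
Proof.
move=> sA; rewrite -map_comp; apply/eq_in_map => -[i | i] vi /=.
  by have siA : s i \in A := sA _ (map_f _ vi); rewrite /collapse siA.
by rewrite -map_comp.
Qed.

Lemma TRel_prune (Sig : finType) (ar : Sig -> nat) k (P : seq (atom ar k))
    (alpha : option nat) (R : Sig) (ts : seq term) :
  {subset ts <= A} -> TRel P alpha R ts -> TRel P alpha R (map (prune A) ts).
Proof.
move=> tsA [a aP [aR [s [wfs tsE]]]]; exists a => //; split => //.
exists (collapse A \o s); split; first by move=> i; apply: wf_collapse.
by rewrite tsE map_prune_skval // -tsE.
Qed.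

End Prune.

Theorem mainTheorem13 (Sig : finType) (ar : Sig -> nat) (k : nat)
  (P : seq (atom ar k)) (alpha : option nat)
  (halpha : if alpha is Some a then 0 < a else true)
  (A : seq term) (hA : all (wf k alpha) A) :
  exists h : term -> term,
    (* h maps A into T^{|A|}_phi(C_alpha) *)
    (forall t, t \in A -> wf k alpha (h t) /\ rank (h t) <= size (undup A)) /\
    (* h is a homomorphism from the induced substructure on A *)
    (forall (R : Sig) (ts : seq term), {subset ts <= A} ->
        TRel P alpha R ts -> TRel P alpha R (map h ts)) /\
    (* h is constant-conservative *)
    (forall t, t \in A -> {subset consts (h t) <= consts t}).
Proof.
exists (prune A); split; [|split].
- move=> t tA; split; first exact/wf_prune/(allP hA).
  exact: leq_trans (rank_prune tA) (count_size _ _).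
- by move=> R ts; apply: TRel_prune.
- by move=> t tA; apply: consts_prune (allP hA t tA).
Qed.
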